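(* Let $\eta>0$, $n\ge 1$, $b\in\{1,\dots,n\}$, and let $x_i=(a_i,y_i)$, $i=1,\dots,n$, with $a_i\in\mathbb{R}^d$, $y_i\in\mathbb{R}$. Let $(\Omega_k)_{k\ge1}$ be i.i.d. uniformly random subsets of $\{1,\dots,n\}$ of cardinality $b$, and set $H_k:=\sum_{i\in\Omega_k}a_ia_i^{\top}$, $q_k:=\sum_{i\in\Omega_k}a_iy_i$. Consider the Markov chain $\theta_k=\left(I-\frac{\eta}{b}H_k\right)\theta_{k-1}+\frac{\eta}{b}q_k$ on $\mathbb{R}^d$ with transition kernel $P$. Assume $\rho:=\mathbb{E}\left\Vert I-\frac{\eta}{b}H_1\right\Vert<1$. Then for every $k\in\mathbb{N}$ and all $\theta,\tilde\theta\in\mathbb{R}^d$, $$\mathcal{W}_1\big(P^k(\theta,\cdot),P^k(\tilde\theta,\cdot)\big)\le\rho^k\Vert\theta-\tilde\theta\Vert.$$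
   Context: This is SGD with batch size $b$ and step size $\eta$ for the quadratic loss $f(\theta,x_i)=(a_i^\top\theta-y_i)^2/2$. $\Vert\cdot\Vert$ on matrices is the operator norm. $P^k(\theta,\cdot)$ is the law of $\theta_k$ when $\theta_0=\theta$. $\mathcal{W}_1$ is the 1-Wasserstein distance: $\mathcal{W}_1(\mu,\nu)=\inf\mathbb{E}\Vert X-Y\Vert$ over couplings of $X\sim\mu$, $Y\sim\nu$. *)

From HB Require Import structures.
From mathcomp Require Import all_boot all_order all_algebra.
From mathcomp Require Import classical_sets reals.

Set Implicit Arguments.
Unset Strict Implicit.
Unset Printing Implicit Defensive.

Import Order.TTheory GRing.Theory Num.Theory.
Local Open Scope ring_scope.
Local Open Scope classical_set_scope.

Section SGD.
Variables (R : realType) (d n : nat).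

Definition vnorm (v : 'cV[R]_d) : R := Num.sqrt (\sum_(i < d) v i 0 ^+ 2).

Definition opnorm (M : 'M[R]_d) : R :=
  sup [set r | exists v : 'cV[R]_d, vnorm v <= 1 /\ r = vnorm (M *m v)].

Variables (a : 'I_n -> 'cV[R]_d) (y : 'I_n -> R) (eta : R) (b : nat).

Definition Hmat (Om : {set 'I_n}) : 'M[R]_d := \sum_(i in Om) (a i *m (a i)^T).
Definition qvec (Om : {set 'I_n}) : 'cV[R]_d := \sum_(i in Om) (y i *: a i).

Definition sgd_step (th : 'cV[R]_d) (Om : {set 'I_n}) : 'cV[R]_d :=
  (1%:M - (eta / b%:R) *: Hmat Om) *m th + (eta / b%:R) *: qvec Om.

Definition admissible (Om : {set 'I_n}) : bool := #|Om| == b.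

Definition nbatch : R := #|[set Om : {set 'I_n} | admissible Om]|%:R.

Definition theta_k (k : nat) (th : 'cV[R]_d) (w : k.-tuple {set 'I_n}) :=
  foldl sgd_step th w.

(* probability mass function of P^k(th, .): the law of theta_k when
   theta_0 = th and Omega_1..Omega_k are i.i.d. uniform among admissible sets *)
Definition Pk (k : nat) (th : 'cV[R]_d) (x : 'cV[R]_d) : R :=
  \sum_(w : k.-tuple {set 'I_n} | all admissible w)
     (if theta_k th w == x then (nbatch ^+ k)^-1 else 0).

Definition rho : R :=
  \sum_(Om : {set 'I_n} | admissible Om)
     opnorm (1%:M - (eta / b%:R) *: Hmat Om) / nbatch.

End SGD.

(* Finitely supported (discrete) measures: a coupling of two finitely
   supported probability laws mu, nu on R^d is necessarily supported on the
   finite product of their supports, hence is a finite list of weighted atoms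
   (w, (u, v)) with w >= 0 whose marginals are mu and nu. *)
Definition is_coupling (R : realType) (d : nat)
  (mu nu : 'cV[R]_d -> R) (pi : seq (R * ('cV[R]_d * 'cV[R]_d))) : Prop :=
  (forall p, p \in pi -> 0 <= p.1) /\
  (forall x, \sum_(p <- pi | p.2.1 == x) p.1 = mu x) /\
  (forall x, \sum_(p <- pi | p.2.2 == x) p.1 = nu x).

Definition W1 (R : realType) (d : nat) (mu nu : 'cV[R]_d -> R) : R :=
  inf [set c | exists pi, is_coupling mu nu pi /\
               c = \sum_(p <- pi) p.1 * vnorm (p.2.1 - p.2.2)].

(* Run the two chains with the same mini-batches (synchronous coupling).
   Each step maps the difference of the two iterates by the same matrix
   [I - eta/b H_Omega], so its norm is multiplied by at most
   [|| I - eta/b H_Omega ||]; averaging over the independent batches one step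
   at a time, the expected distance after k steps is at most
   [rho^k || theta - theta' ||], and W_1 is bounded by the cost of any coupling. *)
From HB Require Import structures.
From mathcomp Require Import all_boot all_order all_algebra.
From mathcomp Require Import classical_sets reals.

Set Implicit Arguments.
Unset Strict Implicit.
Unset Printing Implicit Defensive.

Import Order.TTheory GRing.Theory Num.Theory.
Local Open Scope classical_set_scope.
Local Open Scope ring_scope.

Section VectorNorm.
Variables (R : realType) (d : nat).
Implicit Types (v : 'cV[R]_d) (M : 'M[R]_d).

Lemma vnorm_ge0 v : 0 <= vnorm v.
Proof. exact: sqrtr_ge0. Qed.

Lemma vnorm0 : vnorm (0 : 'cV[R]_d) = 0.
Proof. by rewrite /vnorm big1 ?sqrtr0 // => i _; rewrite mxE expr0n. Qed.

Lemma vnorm_eq0 v : (vnorm v == 0) = (v == 0).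
Proof.
apply/idP/eqP => [|->]; last by rewrite vnorm0.
rewrite /vnorm sqrtr_eq0 => sum_le0.
have sum_eq0 : \sum_(i < d) v i 0 ^+ 2 = 0.
  by apply/le_anti; rewrite sum_le0 sumr_ge0 // => i _; exact: sqr_ge0.
apply/matrixP => i j; rewrite (ord1 j) mxE.
have /eqP := psumr_eq0P (P := predT) (fun i _ => sqr_ge0 (v i 0)) sum_eq0 (i := i) isT.
by rewrite sqrf_eq0 => /eqP.
Qed.

Lemma vnormZ (c : R) v : vnorm (c *: v) = `|c| * vnorm v.
Proof.
rewrite /vnorm -sqrtr_sqr -sqrtrM ?sqr_ge0 // mulr_sumr; congr Num.sqrt.
by apply: eq_bigr => i _; rewrite mxE exprMn.
Qed.

Lemma normr_coord_le_vnorm v j : `|v j 0| <= vnorm v.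
Proof.
rewrite /vnorm -sqrtr_sqr; apply: ler_wsqrtr.
by rewrite (bigD1 j) //= lerDl; apply: sumr_ge0 => i _; exact: sqr_ge0.
Qed.

Lemma opnorm_has_ubound M :
  has_ubound [set r | exists v, vnorm v <= 1 /\ r = vnorm (M *m v)].
Proof.
exists (Num.sqrt (\sum_(i < d) (\sum_(j < d) `|M i j|) ^+ 2)).
move=> _ [v [v_le1 ->]]; apply: ler_wsqrtr; apply: ler_sum => i _.
rewrite -[X in X <= _]real_normK ?num_real //.
apply: lerXn2r; rewrite ?nnegrE ?sumr_ge0 //.
rewrite mxE; apply: le_trans (ler_norm_sum _ _ _) _; apply: ler_sum => j _.
rewrite normrM; apply: ler_piMr => //.
exact: le_trans (normr_coord_le_vnorm v j) v_le1.
Qed.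

Lemma opnorm_ge0 M : 0 <= opnorm M.
Proof.
apply: (ub_le_sup (opnorm_has_ubound M)).
by exists 0; rewrite mulmx0 vnorm0.
Qed.

Lemma vnorm_mulmx_le M v : vnorm (M *m v) <= opnorm M * vnorm v.
Proof.
have [->|v_neq0] := eqVneq v 0; first by rewrite mulmx0 vnorm0 mulr0.
have v_gt0 : 0 < vnorm v by rewrite lt_def vnorm_eq0 v_neq0 vnorm_ge0.
have normalized_le1 : vnorm ((vnorm v)^-1 *: v) <= 1.
  by rewrite vnormZ ger0_norm ?invr_ge0 ?vnorm_ge0 // mulVf ?gt_eqF.
have := ub_le_sup (opnorm_has_ubound M) (ex_intro _ _ (conj normalized_le1 erefl)).
rewrite -scalemxAr vnormZ ger0_norm ?invr_ge0 ?vnorm_ge0 //.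
by rewrite mulrC ler_pdivrMr.
Qed.

End VectorNorm.

Lemma big_all_tuple_cons (V : nmodType) (T : finType) (P : pred T) k
    (F : k.+1.-tuple T -> V) :
  \sum_(w : k.+1.-tuple T | all P w) F w =
  \sum_(x | P x) \sum_(w : k.-tuple T | all P w) F [tuple of x :: w].
Proof.
rewrite pair_big_dep /=.
rewrite (reindex (fun p : T * k.-tuple T => [tuple of p.1 :: p.2])) //=.
exists (fun t : k.+1.-tuple T => (thead t, [tuple of behead t])).
  by move=> [x w] _; congr pair; apply: val_inj.
move=> t _; apply: val_inj => /=.
by case: t => [[|z s] //=] _; rewrite /thead (tnth_nth z).
Qed.

Lemma W1_le_coupling_cost (R : realType) (d : nat) (mu nu : 'cV[R]_d -> R) pi :
  is_coupling mu nu pi ->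
  W1 mu nu <= \sum_(p <- pi) p.1 * vnorm (p.2.1 - p.2.2).
Proof.
move=> pi_coupling; apply: ge_inf; last by exists pi.
exists 0 => _ [pi' [[pi'_ge0 _] ->]].
rewrite big_seq; apply: sumr_ge0 => p p_in.
by rewrite mulr_ge0 ?pi'_ge0 ?vnorm_ge0.
Qed.

Section SynchronousCoupling.
Variables (R : realType) (d n : nat) (a : 'I_n -> 'cV[R]_d)
  (y : 'I_n -> R) (eta : R) (b : nat).

Local Notation step := (sgd_step a y eta b).
Local Notation theta := (theta_k a y eta b).
Local Notation admissible := (admissible b).

Definition sgd_matrix (Om : {set 'I_n}) : 'M[R]_d :=
  1%:M - (eta / b%:R) *: Hmat a Om.

Lemma sgd_step_sub th th' Om :
  step th Om - step th' Om = sgd_matrix Om *m (th - th').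
Proof. by rewrite /sgd_step mulmxBr opprD addrACA subrr addr0. Qed.

Lemma rho_ge0 : 0 <= rho a eta b.
Proof. by apply: sumr_ge0 => Om _; rewrite divr_ge0 ?opnorm_ge0 ?ler0n. Qed.

Lemma sum_theta_dist_le k th th' :
  \sum_(w : k.-tuple {set 'I_n} | all admissible w)
     (nbatch R n b)^-1 ^+ k * vnorm (theta th w - theta th' w)
  <= rho a eta b ^+ k * vnorm (th - th').
Proof.
set c := (nbatch R n b)^-1; have c_ge0 : 0 <= c by rewrite invr_ge0 ler0n.
elim: k th th' => [|k IHk] th th'.
  by rewrite (big_pred1 [tuple]) ?expr0 ?mul1r // => w; rewrite tuple0 /= eqxx.
rewrite big_all_tuple_cons [rho _ _ _ ^+ _]exprS -mulrA.
have rhoE : rho a eta b = \sum_(Om | admissible Om) c * opnorm (sgd_matrix Om).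
  by apply: eq_bigr => Om _; rewrite mulrC.
rewrite {1}rhoE mulr_suml; apply: ler_sum => Om _.
under eq_bigr do rewrite exprS -mulrA.
rewrite -mulr_sumr -mulrA; apply: ler_wpM2l => //.
apply: le_trans (IHk (step th Om) (step th' Om)) _.
rewrite mulrCA; apply: ler_wpM2l; first exact: exprn_ge0 rho_ge0.
by rewrite sgd_step_sub vnorm_mulmx_le.
Qed.

Definition sync_coupling k th th' : seq (R * ('cV[R]_d * 'cV[R]_d)) :=
  [seq ((nbatch R n b ^+ k)^-1, (theta th w, theta th' w))
  | w <- enum [pred w : k.-tuple {set 'I_n} | all admissible w]].

Lemma sync_coupling_is_coupling k th th' :
  is_coupling (Pk a y eta b k th) (Pk a y eta b k th') (sync_coupling k th th').
Proof.
split; [|split] => [p /mapP [w _ ->]|x|x].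
- by rewrite invr_ge0 exprn_ge0 ?ler0n.
- by rewrite big_map big_enum_cond /Pk -big_mkcondr.
- by rewrite big_map big_enum_cond /Pk -big_mkcondr.
Qed.

Lemma sync_coupling_cost k th th' :
  \sum_(p <- sync_coupling k th th') p.1 * vnorm (p.2.1 - p.2.2)
  <= rho a eta b ^+ k * vnorm (th - th').
Proof.
rewrite big_map big_enum /=; under eq_bigr do rewrite -exprVn.
exact: sum_theta_dist_le.
Qed.

End SynchronousCoupling.

Theorem lemma3p1 (R : realType) (d n : nat) (a : 'I_n -> 'cV[R]_d)
  (y : 'I_n -> R) (eta : R) (b : nat) :
  0 < eta -> (1 <= n)%N -> (1 <= b <= n)%N ->
  rho a eta b < 1 ->
  forall (k : nat) (th th' : 'cV[R]_d),
    W1 (Pk a y eta b k th) (Pk a y eta b k th')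
    <= (rho a eta b) ^+ k * vnorm (th - th').
Proof.
(* The coupling bound holds without any of these hypotheses. *)
move=> _ _ _ _ k th th'.
apply: le_trans (W1_le_coupling_cost (sync_coupling_is_coupling a y eta b k th th')) _.
exact: sync_coupling_cost.
Qed.
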